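(* For all $k\geq 0,l\geq 1$ and $k+l$ even, one has \[\langle T_{k,l}\rangle_q = \begin{cases} D^{l-1}G_{k-l+2} & \text{if } k-l\geq 0, \\ D^k G_{l-k} & \text{if } k-l\leq 2.\end{cases}\]
   Context: $\mathscr{P}$ is the set of partitions, $r_m(\lambda)$ the number of parts of $\lambda$ equal to $m$, and $\langle f\rangle_q=\sum_\lambda f(\lambda)q^{|\lambda|}/\sum_\lambda q^{|\lambda|}$. The Faulhaber polynomial $F_l$ is the polynomial with zero constant term with $F_l(n)=\sum_{i=1}^n i^{l-1}$ for $n\ge1$. $T_{k,l}(\lambda)=-\frac{B_{k+l}}{2(k+l)}(\delta_{l,1}+\delta_{k,0})+\sum_{m\ge1}m^kF_l(r_m(\lambda))$; equivalently, with $c_i(\lambda)=\#\{j\le i\mid\lambda_j=\lambda_i\}$, $T_{k,l}(\lambda)=-\frac{B_{k+l}}{2(k+l)}(\delta_{l,1}+\delta_{k,0})+\sum_i\lambda_i^kc_i(\lambda)^{l-1}$. $G_k=-\frac{B_k}{2k}+\sum_{r,m\ge1}m^{k-1}q^{mr}$ are the Eisenstein series and $D=q\frac{d}{dq}$. *)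

From HB Require Import structures.
From mathcomp Require Import all_boot all_order all_algebra.
Set Implicit Arguments. Unset Strict Implicit. Unset Printing Implicit Defensive.
Import Order.TTheory GRing.Theory Num.Theory.
Local Open Scope ring_scope.

(* Formal power series in q with rational coefficients: coefficient sequences. *)
Definition series := nat -> rat.

Definition smul (a b : series) : series :=
  fun n => \sum_(i < n.+1) a i * b (n - i)%N.

(* Coefficients 0..n of the multiplicative inverse of a series (a 0 <> 0). *)
Fixpoint sinv_list (a : series) (n : nat) : seq rat :=
  match n with
  | 0 => [:: (a 0%N)^-1]
  | m.+1 => let s := sinv_list a m in
      rcons s (- (a 0%N)^-1 * \sum_(i < m.+1) a i.+1 * nth 0 s (m - i)%N)
  end.
Definition sinv (a : series) : series := fun n => nth 0 (sinv_list a n) n.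

(* Partitions of n are encoded by their multiplicity functions:
   r : {ffun 'I_n -> 'I_n.+1}, with r i = r_{i+1}(lambda) (number of parts
   equal to i+1), subject to sum_m m r_m = n.  Parts larger than n cannot occur. *)
Definition is_part (n : nat) (r : {ffun 'I_n -> 'I_n.+1}) : bool :=
  (\sum_(i < n) i.+1 * r i)%N == n.

Definition pgen (f : forall n, {ffun 'I_n -> 'I_n.+1} -> rat) : series :=
  fun n => \sum_(r : {ffun 'I_n -> 'I_n.+1} | is_part r) f n r.

(* <f>_q = (sum_lambda f(lambda) q^|lambda|) / (sum_lambda q^|lambda|). *)
Definition qbracket (f : forall n, {ffun 'I_n -> 'I_n.+1} -> rat) : series :=
  smul (pgen f) (sinv (pgen (fun _ _ => 1))).

(* Bernoulli numbers, B_0 = 1, sum_{j=0}^{m} C(m+1,j) B_j = 0 for m >= 1. *)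
Fixpoint bern_list (n : nat) : seq rat :=
  match n with
  | 0 => [:: 1]
  | m.+1 => let s := bern_list m in
      rcons s (- (m.+2%:R)^-1 * \sum_(j < m.+1) 'C(m.+2, j)%:R * nth 0 s j)
  end.
Definition bernoulli (n : nat) : rat := nth 0 (bern_list n) n.

(* Faulhaber polynomial evaluated at a natural number r: sum_{i=1}^r i^(l-1)
   (equals 0 at r = 0 since F_l has zero constant term). *)
Definition faulhaber (l r : nat) : rat := (\sum_(1 <= i < r.+1) i ^ (l - 1))%:R.

Definition kron (a b : nat) : rat := (a == b)%:R.

Definition Tkl (k l : nat) (n : nat) (r : {ffun 'I_n -> 'I_n.+1}) : rat :=
  - bernoulli (k + l) / (2 * (k + l)%:R) * (kron l 1 + kron k 0)
  + \sum_(i < n) (i.+1 ^ k)%:R * faulhaber l (r i).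

Definition eisenstein (k : nat) : series :=
  fun n => if n is 0 then - bernoulli k / (2 * k%:R)
           else (\sum_(1 <= m < n.+1 | (m %| n)%N) m ^ (k - 1))%:R.

(* D = q d/dq, iterated j times. *)
Definition Dpow (j : nat) (a : series) : series := fun n => (n ^ j)%:R * a n.

From mathcomp Require Import all_boot all_order all_algebra.
From mathcomp Require Import ring zify.
Set Implicit Arguments. Unset Strict Implicit. Unset Printing Implicit Defensive.
Import Order.TTheory GRing.Theory Num.Theory.
Local Open Scope ring_scope.

(* For a statistic
   f = sum_m h(m) F(r_m), expanding the sum over partitions one part size at a
   time gives
     sum_lambda f(lambda) q^|lambda|
       = sum_m (sum_r h(m) F(r) q^(m r)) prod_(m' <> m) 1/(1 - q^m').
   When F(r) = w(1) + ... + w(r) one has sum_r F(r) y^r = (1-y)^-1 sum_t w(t) y^t,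
   so the generating function is P(q) sum_(m,t) h(m) w(t) q^(m t), with P the
   partition generating function.  Dividing by P, <T_(k,l)>_q is the constant
   term plus sum_(m,t) m^k t^(l-1) q^(m t), whose n-th coefficient
   sum_(m t = n) m^k t^(l-1) is n^(l-1) sigma_(k-l+1)(n) or, exchanging m and t,
   n^k sigma_(l-k-1)(n).  All power series identities are checked on polynomial
   truncations modulo q^(N+1). *)

Section EqUpto.
Variable R : nzSemiRingType.
Implicit Types p q : {poly R}.

Definition eq_upto (N : nat) p q := forall j, (j <= N)%N -> p`_j = q`_j.

Lemma eq_upto_refl N p : eq_upto N p p. Proof. by []. Qed.

Lemma eq_upto_sym N p q : eq_upto N p q -> eq_upto N q p.
Proof. by move=> pq j jN; rewrite pq. Qed.

Lemma eq_upto_add N p p' q q' :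
  eq_upto N p p' -> eq_upto N q q' -> eq_upto N (p + q) (p' + q').
Proof. by move=> pp' qq' j jN; rewrite !coefD pp' // qq'. Qed.

Lemma eq_upto_mul N p p' q q' :
  eq_upto N p p' -> eq_upto N q q' -> eq_upto N (p * q) (p' * q').
Proof.
move=> pp' qq' j jN; rewrite !coefM; apply: eq_bigr => i _.
by rewrite pp' ?qq' //; move: (ltn_ord i); lia.
Qed.

Lemma eq_upto_sum N (I : Type) (r : seq I) (P : pred I) (F G : I -> {poly R}) :
  (forall i, P i -> eq_upto N (F i) (G i)) ->
  eq_upto N (\sum_(i <- r | P i) F i) (\sum_(i <- r | P i) G i).
Proof. by move=> FG; apply: big_ind2 => // *; apply: eq_upto_add. Qed.

Lemma eq_upto_prod N (I : Type) (r : seq I) (P : pred I) (F G : I -> {poly R}) :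
  (forall i, P i -> eq_upto N (F i) (G i)) ->
  eq_upto N (\prod_(i <- r | P i) F i) (\prod_(i <- r | P i) G i).
Proof. by move=> FG; apply: big_ind2 => // *; apply: eq_upto_mul. Qed.

Lemma eq_upto_addXn N M p q : (N < M)%N -> eq_upto N (q + 'X^M * p) q.
Proof. by move=> NM j jN; rewrite coefD coefXnM ifT ?addr0 //; lia. Qed.

End EqUpto.

Definition trunc (N : nat) (a : series) : {poly rat} := \poly_(i < N.+1) a i.

Lemma coef_trunc N a j : (j <= N)%N -> (trunc N a)`_j = a j.
Proof. by move=> jN; rewrite coef_poly ltnS jN. Qed.

Lemma smulE N a b j : (j <= N)%N -> smul a b j = (trunc N a * trunc N b)`_j.
Proof.
move=> jN; rewrite coefM; apply: eq_bigr => i _.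
by rewrite !coef_trunc //; move: (ltn_ord i); lia.
Qed.

Lemma size_sinv_list a m : size (sinv_list a m) = m.+1.
Proof. by elim: m => //= m IHm; rewrite size_rcons IHm. Qed.

Lemma sinv_listE a m j : (j <= m)%N -> nth 0 (sinv_list a m) j = sinv a j.
Proof.
elim: m => [|m IHm]; first by rewrite leqn0 => /eqP ->.
rewrite leq_eqVlt => /orP[/eqP -> // | jm].
by rewrite /= nth_rcons size_sinv_list jm IHm.
Qed.

Lemma sinvS a m :
  sinv a m.+1 = - (a 0%N)^-1 * \sum_(i < m.+1) a i.+1 * sinv a (m - i)%N.
Proof.
rewrite {1}/sinv /= nth_rcons size_sinv_list ltnn eqxx.
by congr (_ * _); apply: eq_bigr => i _; rewrite sinv_listE ?leq_subr.
Qed.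

Lemma smul_sinv a n : a 0%N != 0 -> smul a (sinv a) n = (n == 0%N)%:R.
Proof.
move=> a0; case: n => [|n]; first by rewrite /smul big_ord1 /sinv /= mulfV.
rewrite /smul big_ord_recl subn0 sinvS mulrA mulrN mulfV // mulN1r.
by under [X in _ + X]eq_bigr => i _ do rewrite subSS; rewrite addNr.
Qed.

Lemma smul_sinv_cancel (a b e : series) :
  a 0%N != 0 -> (forall n, b n = smul a e n) -> forall n, smul b (sinv a) n = e n.
Proof.
move=> a0 b_ae n.
have b_ae_n : eq_upto n (trunc n b) (trunc n a * trunc n e).
  by move=> j jn; rewrite coef_trunc // b_ae (smulE _ _ jn).
have a_inv_n : eq_upto n (trunc n a * trunc n (sinv a)) 1.
  by move=> j jn; rewrite -smulE // smul_sinv // coef1.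
rewrite (smulE _ _ (leqnn n)) (eq_upto_mul b_ae_n (@eq_upto_refl _ n _)) //.
rewrite mulrAC mulrC (eq_upto_mul (@eq_upto_refl _ n _) a_inv_n) //.
by rewrite mulr1 coef_trunc.
Qed.

Section Geometric.
Variable R : comNzRingType.
Implicit Types (w : nat -> R) (y : R).

Definition geom N y := \sum_(c < N.+1) y ^+ c.
Definition psum w c := \sum_(1 <= t < c.+1) w t.
Definition wpoly N w y := \sum_(1 <= t < N.+1) w t * y ^+ t.
Definition spoly N w y := \sum_(c < N.+1) psum w c * y ^+ c.

Lemma spoly_telescope N w y :
  (1 - y) * spoly N w y = wpoly N w y - psum w N * y ^+ N.+1.
Proof.
elim: N => [|N IHN].
  by rewrite /spoly /wpoly /psum big_ord1 !big_geq // !mul0r mulr0 subr0.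
have wpolyS : wpoly N.+1 w y = wpoly N w y + w N.+1 * y ^+ N.+1.
  by rewrite /wpoly big_nat_recr.
have psumS : psum w N.+1 = psum w N + w N.+1 by rewrite /psum big_nat_recr.
rewrite /spoly big_ord_recr /= -/(spoly N w y) mulrDr IHN wpolyS psumS !exprS.
ring.
Qed.

Lemma geom_mul_wpoly N w y : geom N y * wpoly N w y =
  spoly N w y + y ^+ N.+1 * (psum w N * geom N y - spoly N w y).
Proof.
have geom_telescope : (1 - y) * geom N y = 1 - y ^+ N.+1.
  by rewrite -opprB mulNr -subrX1 opprB.
have -> : wpoly N w y = (1 - y) * spoly N w y + psum w N * y ^+ N.+1.
  by rewrite spoly_telescope subrK.
by rewrite mulrDr mulrCA mulrA geom_telescope; ring.
Qed.
End Geometric.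

Lemma sum_nat_indicator (R : pzSemiRingType) (F : nat -> R) (P : pred nat) m n q :
  (m <= q < n)%N -> (forall t, (m <= t < n)%N -> P t = (t == q)) ->
  \sum_(m <= t < n) F t * (P t)%:R = F q.
Proof.
move=> q_in P_q; rewrite (bigD1_seq q) ?mem_index_iota ?iota_uniq //=.
rewrite P_q // eqxx mulr1 big1_seq ?addr0 // => t /andP[tq].
by rewrite mem_index_iota => /P_q ->; rewrite (negbTE tq) mulr0.
Qed.

Section GeometricXn.
Variable R : comNzRingType.

Lemma coef_geomXn N a m : (0 < a)%N -> (m <= N)%N ->
  (geom N ('X^a : {poly R}))`_m = (a %| m)%:R.
Proof.
move=> a_gt0 mN; rewrite /geom coef_sum.
under eq_bigr => c _ do rewrite -exprM coefXn.
case: (boolP (a %| m)%N) => [/dvdnP[q m_qa] | a_ndvd_m]; last first.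
  apply: big1 => c _; case: eqP => // m_ac.
  by case/negP: a_ndvd_m; rewrite m_ac dvdn_mulr.
subst m; rewrite -(big_mkord xpredT (fun c => ((q * a)%N == (a * c)%N)%:R)).
under eq_bigr => c _ do rewrite -[_%:R]mul1r.
apply: (@sum_nat_indicator _ _ _ _ _ q) => [|t _]; last by rewrite mulnC eqn_pmul2l // eq_sym.
by rewrite leq0n /= ltnS (leq_trans _ mN) // leq_pmulr.
Qed.

Lemma geom_eq_upto N M a : (0 < a)%N -> (N <= M)%N ->
  eq_upto N (geom N ('X^a : {poly R})) (geom M 'X^a).
Proof. by move=> a_gt0 NM j jN; rewrite !coef_geomXn // (leq_trans jN). Qed.

Lemma geom_eq_upto1 N M a : (N < a)%N -> (N <= M)%N ->
  eq_upto N 1 (geom M ('X^a : {poly R})).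
Proof.
move=> Na NM j jN; rewrite coef1 coef_geomXn ?(leq_trans jN) //; last by lia.
have [-> | j_gt0] := posnP j; first by rewrite dvdn0.
by have [/(dvdn_leq j_gt0) | //] := boolP (a %| j)%N; lia.
Qed.

Lemma spoly_eq_upto N a (w : nat -> {poly R}) : (0 < a)%N ->
  eq_upto N (spoly N w 'X^a) (geom N 'X^a * wpoly N w 'X^a).
Proof.
move=> a_gt0; rewrite geom_mul_wpoly -exprM; apply: eq_upto_sym; apply: eq_upto_addXn.
exact: leq_pmull.
Qed.

End GeometricXn.

Lemma sum_ffun_sum_mul_prod (R : comPzSemiRingType) (I J : finType) (H F : I -> J -> R) :
  \sum_(r : {ffun I -> J}) (\sum_i H i (r i)) * \prod_i F i (r i) =
  \sum_i0 (\sum_c H i0 c * F i0 c) * \prod_(i | i != i0) \sum_c F i c.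
Proof.
under eq_bigr => r _ do rewrite mulr_suml.
rewrite exchange_big /=; apply: eq_bigr => i0 _.
pose G i c := if i == i0 then H i c * F i c else F i c.
transitivity (\sum_(r : {ffun I -> J}) \prod_i G i (r i)).
  apply: eq_bigr => r _; rewrite [RHS](bigD1 i0) //= (bigD1 i0) //= /G eqxx mulrA.
  by congr (_ * _); apply: eq_bigr => i /negbTE ->.
rewrite -bigA_distr_bigA (bigD1 i0) //= /G eqxx; congr (_ * _).
by apply: eq_bigr => i /negbTE ->.
Qed.

Definition npart : series := pgen (fun _ _ => 1).

Definition partition_poly (n : nat) : {poly rat} := \prod_(i < n) geom n 'X^(i.+1).

Lemma pgenE F n : pgen F n =
  (\sum_(r : {ffun 'I_n -> 'I_n.+1}) (F n r)%:P * \prod_(i < n) 'X^(i.+1) ^+ r i)`_n.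
Proof.
rewrite coef_sum /pgen big_mkcond; apply: eq_bigr => r _.
under eq_bigr => i _ do rewrite -exprM.
rewrite -(big_morph _ (fun a b => exprD 'X a b) (expr0 _)).
by rewrite coefCM coefXn /is_part eq_sym; case: eqP; rewrite ?mulr1 ?mulr0.
Qed.

Lemma npartE j : npart j = (partition_poly j)`_j.
Proof.
rewrite /npart pgenE /partition_poly /geom bigA_distr_bigA /=.
by under eq_bigr => r _ do rewrite polyC1 mul1r.
Qed.

Lemma npart0 : npart 0 = 1.
Proof.
rewrite /npart /pgen (eq_bigl xpredT) => [|r]; last by rewrite /is_part big_ord0.
by rewrite sumr_const card_ffun !card_ord.
Qed.

Lemma partition_poly_eq_upto j n :
  (j <= n)%N -> eq_upto j (partition_poly j) (partition_poly n).
Proof.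
move=> jn; rewrite /partition_poly (big_ord_widen n (fun i => geom j 'X^(i.+1)) jn).
rewrite [in X in eq_upto _ _ X](bigID (fun i : 'I_n => (i < j)%N)) /=.
have -> : \prod_(i < n | (i < j)%N) geom j ('X^(i.+1) : {poly rat}) =
    (\prod_(i < n | (i < j)%N) geom j 'X^(i.+1)) * \prod_(i < n | ~~ (i < j)%N) 1.
  by rewrite big1_eq mulr1.
apply: eq_upto_mul; apply: eq_upto_prod => i i_j.
  exact: geom_eq_upto.
by apply: geom_eq_upto1; lia.
Qed.

Lemma partition_poly_eq_trunc n : eq_upto n (partition_poly n) (trunc n npart).
Proof. by move=> j jn; rewrite coef_trunc // npartE (partition_poly_eq_upto jn). Qed.

Section FactorSum.
Variable R : comPzSemiRingType.
Implicit Types F : nat -> nat -> R.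

Definition factor_sum n j F :=
  \sum_(1 <= m < n.+1) \sum_(1 <= t < n.+1) F m t * (j == m * t)%N%:R.

Lemma factor_sumC n j F : factor_sum n j F = factor_sum n j (fun t m => F m t).
Proof.
rewrite /factor_sum exchange_big /=.
by apply: eq_bigr => t _; apply: eq_bigr => m _; rewrite mulnC.
Qed.

Lemma factor_sumE n j F : (j <= n)%N ->
  factor_sum n j F = \sum_(1 <= m < j.+1 | (m %| j)%N) F m (j %/ m)%N.
Proof.
move=> jn; have [-> | j_gt0] := posnP j.
  rewrite big_geq // /factor_sum big1_seq // => m /andP[_].
  rewrite mem_index_iota => /andP[m_gt0 _]; rewrite big1_seq // => t /andP[_].
  by rewrite mem_index_iota eq_sym muln_eq0 => /andP[t_gt0 _]; rewrite !gtn_eqF ?mulr0.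
have inner m : (1 <= m < n.+1)%N ->
    \sum_(1 <= t < n.+1) F m t * (j == m * t)%N%:R = if (m %| j)%N then F m (j %/ m)%N else 0.
  move=> /andP[m_gt0 _]; case: (boolP (m %| j)%N) => [m_dvd_j | m_ndvd_j].
    apply: sum_nat_indicator => [|t _].
      by rewrite divn_gt0 // dvdn_leq //= ltnS (leq_trans (leq_div _ _) jn).
    by rewrite -{1}(divnK m_dvd_j) mulnC eqn_pmul2l // eq_sym.
  apply: big1 => t _; case: eqP => [j_mt | _]; last by rewrite mulr0.
  by case/negP: m_ndvd_j; rewrite j_mt dvdn_mulr.
rewrite /factor_sum big_nat_cond
  (eq_bigr (fun m => if (m %| j)%N then F m (j %/ m)%N else 0)); last first.
  by move=> m /andP[m_in _]; rewrite inner.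
rewrite -big_nat_cond (big_cat_nat _ (n := j.+1)) //= [RHS]big_mkcond /=.
rewrite [X in _ + X]big1_seq ?addr0 // => m /andP[_].
rewrite mem_index_iota => /andP[jm _].
by case: ifP => // /(dvdn_leq j_gt0); lia.
Qed.

End FactorSum.

Definition dirichlet (h w : nat -> rat) : series :=
  fun j => \sum_(1 <= m < j.+1 | (m %| j)%N) h m * w (j %/ m)%N.

Lemma dirichletC h w j : dirichlet h w j = dirichlet w h j.
Proof.
rewrite /dirichlet -(@factor_sumE _ j j (fun m t => h m * w t)) //.
rewrite factor_sumC factor_sumE //.
by apply: eq_bigr => m _; rewrite mulrC.
Qed.

Section AdditiveStatistic.
Variables h w : nat -> rat.

Definition lambert_poly n : {poly rat} :=
  \sum_(i < n) (h i.+1)%:P * wpoly n (fun t => (w t)%:P) 'X^(i.+1).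

Lemma lambert_poly_eq_trunc n : eq_upto n (lambert_poly n) (trunc n (dirichlet h w)).
Proof.
move=> j jn; rewrite coef_trunc // /dirichlet -(@factor_sumE _ n j (fun m t => h m * w t)) //.
have coef_term m : ((h m)%:P * wpoly n (fun t => (w t)%:P) 'X^m)`_j =
    \sum_(1 <= t < n.+1) h m * w t * (j == m * t)%N%:R.
  rewrite coefCM /wpoly coef_sum mulr_sumr; apply: eq_bigr => t _.
  by rewrite -exprM coefCM coefXn mulrA.
rewrite /lambert_poly coef_sum; under eq_bigr do rewrite coef_term.
by rewrite /factor_sum big_add1 /= big_mkord.
Qed.

Lemma pgen_sum_psum n :
  pgen (fun n (r : {ffun 'I_n -> 'I_n.+1}) => \sum_(i < n) h i.+1 * psum w (r i)) n =
  smul npart (dirichlet h w) n.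
Proof.
set w' := fun t => (w t)%:P.
set y := fun i : 'I_n => ('X^(i.+1) : {poly rat}).
have spolyE (i : 'I_n) : \sum_(c < n.+1) (h i.+1 * psum w c)%:P * y i ^+ c =
    (h i.+1)%:P * spoly n w' (y i).
  rewrite /spoly mulr_sumr; apply: eq_bigr => c _.
  by rewrite polyCM /psum rmorph_sum mulrA.
have partition_lambert : partition_poly n * lambert_poly n = \sum_(i0 < n)
    (h i0.+1)%:P * (geom n (y i0) * wpoly n w' (y i0)) * \prod_(i < n | i != i0) geom n (y i).
  rewrite /lambert_poly mulr_sumr; apply: eq_bigr => i0 _.
  by rewrite /partition_poly (bigD1 i0) //=; ring.
rewrite pgenE.
under eq_bigr => r _ do rewrite rmorph_sum.
rewrite (sum_ffun_sum_mul_prod (fun (i : 'I_n) (c : 'I_n.+1) => (h i.+1 * psum w c)%:P)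
                               (fun (i : 'I_n) (c : 'I_n.+1) => y i ^+ c)).
under eq_bigr => i0 _ do rewrite spolyE.
set expansion := \sum_(i0 < n) _.
have expansion_eq_upto : eq_upto n expansion (partition_poly n * lambert_poly n).
  rewrite partition_lambert; apply: eq_upto_sum => i0 _.
  apply: eq_upto_mul; last exact: eq_upto_refl.
  by apply: eq_upto_mul; [exact: eq_upto_refl | exact: spoly_eq_upto].
rewrite (expansion_eq_upto _ (leqnn n)).
rewrite (eq_upto_mul (@partition_poly_eq_trunc n) (@lambert_poly_eq_trunc n)) //.
by rewrite -smulE.
Qed.
End AdditiveStatistic.

Section Tkl.
Variables k l : nat.

Definition Tkl_const : rat := - bernoulli (k + l) / (2 * (k + l)%:R) * (kron l 1 + kron k 0).

Definition Tkl_bracket : series := fun j =>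
  if j is 0 then Tkl_const else dirichlet (fun m => (m ^ k)%:R) (fun t => (t ^ (l - 1))%:R) j.

Lemma pgen_Tkl n : pgen (Tkl k l) n = smul npart Tkl_bracket n.
Proof.
have faulhaberE c : faulhaber l c = psum (fun t => (t ^ (l - 1))%:R) c.
  by rewrite /faulhaber natr_sum.
have -> : pgen (Tkl k l) n = Tkl_const * npart n +
    pgen (fun n (r : {ffun 'I_n -> 'I_n.+1}) =>
            \sum_(i < n) (i.+1 ^ k)%:R * psum (fun t => (t ^ (l - 1))%:R) (r i)) n.
  rewrite /pgen /npart /pgen mulr_sumr -big_split /=; apply: eq_bigr => r _.
  by rewrite mulr1 /Tkl; congr (_ + _); apply: eq_bigr => i _; rewrite faulhaberE.
rewrite (pgen_sum_psum (fun m => (m ^ k)%:R)) /smul !big_ord_recr /= subnn.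
rewrite /dirichlet big_geq // mulr0 addr0.
rewrite addrC mulrC; congr (_ + _); apply: eq_bigr => i _.
have : (0 < n - i)%N by rewrite subn_gt0.
by case: (n - i)%N.
Qed.

Lemma qbracket_TklE n : qbracket (Tkl k l) n = Tkl_bracket n.
Proof.
rewrite /qbracket -/npart; apply: smul_sinv_cancel => [|m]; last exact: pgen_Tkl.
by rewrite npart0 oner_neq0.
Qed.

End Tkl.

Lemma expn_divisor_split m j a b : (a <= b)%N -> (m %| j)%N ->
  (m ^ b * (j %/ m) ^ a = j ^ a * m ^ (b - a))%N.
Proof.
move=> ab /divnK {2}<-; rewrite expnMn -{1}(subnK ab) expnD; ring.
Qed.

Lemma dirichlet_pow a b j : (a <= b)%N ->
  dirichlet (fun m => (m ^ b)%:R) (fun t => (t ^ a)%:R) j =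
  (j ^ a)%:R * (\sum_(1 <= m < j.+1 | (m %| j)%N) m ^ (b - a))%:R.
Proof.
move=> ab; rewrite natr_sum mulr_sumr; apply: eq_bigr => m m_dvd_j.
by rewrite -!natrM expn_divisor_split.
Qed.

Lemma Tkl_bracketE_le k l j : (1 <= l)%N -> (l <= k)%N ->
  Tkl_bracket k l j = Dpow (l - 1) (eisenstein (k - l + 2)) j.
Proof.
move=> l_gt0 lk; case: j => [|j]; last first.
  rewrite /= dirichlet_pow /Dpow /eisenstein; last by lia.
  by have -> : (k - l + 2 - 1 = k - (l - 1))%N by lia.
rewrite /Tkl_bracket /Tkl_const /Dpow /eisenstein /kron (gtn_eqF (leq_trans l_gt0 lk)) addr0.
have [l1 | l_neq1] := eqVneq l 1%N.
  subst l; rewrite subnn expn0 mulr1 mul1r.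
  by have -> : (k - 1 + 2 = k + 1)%N by lia.
by rewrite mulr0 exp0n ?mul0r //; lia.
Qed.

Lemma Tkl_bracketE_lt k l j : ~~ odd (k + l) -> (k < l)%N ->
  Tkl_bracket k l j = Dpow k (eisenstein (l - k)) j.
Proof.
move=> even_kl kl; case: j => [|j]; last first.
  rewrite /= dirichletC dirichlet_pow /Dpow /eisenstein; last by lia.
  by have -> : (l - 1 - k = l - k - 1)%N by lia.
rewrite /Tkl_bracket /Tkl_const /Dpow /eisenstein /kron.
have [k0 | k_gt0] := posnP k.
  subst k; rewrite add0n in even_kl *; rewrite subn0 expn0 mul1r.
  (* Parity rules out l = 1, where both Kronecker deltas would be 1. *)
  have -> : (l == 1%N) = false by apply/eqP => l1; rewrite l1 in even_kl.
  by rewrite add0r mulr1.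
by rewrite (gtn_eqF (leq_ltn_trans k_gt0 kl)) addr0 mulr0 exp0n // mul0r.
Qed.

Theorem proposition3p1p2 (k l : nat) :
  (1 <= l)%N -> ~~ odd (k + l) ->
  (forall n : nat,
     (l <= k)%N -> qbracket (Tkl k l) n = Dpow (l - 1) (eisenstein (k - l + 2)) n) /\
  (forall n : nat,
     (k < l)%N -> qbracket (Tkl k l) n = Dpow k (eisenstein (l - k)) n).
Proof.
move=> l_gt0 even_kl; split=> n kl; rewrite qbracket_TklE.
  exact: Tkl_bracketE_le.
exact: Tkl_bracketE_lt.
Qed.
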